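(* Let $N>0$; all statements below concern $\tau\in(0,1)$. (i) There exists a unique $\tau_1^{(1)}\in(\frac12,\frac1{\sqrt2})$ such that $\beta_2^*(\tau)-\tau\beta_1^{**}(\tau)=2$ holds if and only if $\tau=\tau_1^{(1)}$; equivalently, [$\beta_2^*(\tau)=\underline\beta_2(\tau)$ and $\beta_1^{**}(\tau)=\overline\beta_1(\tau)$] holds if and only if $\tau=\tau_1^{(1)}$. More precisely, $\beta_2^*(\tau)-\tau\beta_1^{**}(\tau)>2$ if and only if $\tau\in(0,\tau_1^{(1)})$, and $0<\beta_1^{**}(\tau)<\overline\beta_1(\tau)$ for all $\tau\in(0,1)\setminus\{\tau_1^{(1)}\}$. (ii) There exists a unique $\tau_1^{(2)}\in(\frac12,\frac1{\sqrt2})$ such that $\beta_1^*(\tau)-\tau\beta_2^{**}(\tau)=2(N+1)$ holds if and only if $\tau=\tau_1^{(2)}$; equivalently, [$\beta_1^*(\tau)=\underline\beta_1(\tau)$ and $\beta_2^{**}(\tau)=\overline\beta_2(\tau)$] holds if and only if $\tau=\tau_1^{(2)}$. More precisely, $\beta_1^*(\tau)-\tau\beta_2^{**}(\tau)>2(N+1)$ if and only if $\tau\in(0,\tau_1^{(2)})$, and $0<\beta_2^{**}(\tau)<\overline\beta_2(\tau)$ for all $\tau\in(0,1)\setminus\{\tau_1^{(2)}\}$. Moreover $\frac12<\tau_1^{(2)}<\tau_1^{(1)}<\frac1{\sqrt2}$.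
   Context: With $D=(N+1)^2+2\tau(N+1)+1$: $$\underline\beta_1(\tau)=\tfrac{2}{1-\tau^2}(N+1+\tau+\tau\sqrt D),\qquad \overline\beta_1(\tau)=\tfrac{2}{1-\tau^2}(N+1+\tau+\sqrt D),$$ $$\underline\beta_2(\tau)=\tfrac{2}{1-\tau^2}(1+\tau(N+1)+\tau\sqrt D),\qquad \overline\beta_2(\tau)=\tfrac{2}{1-\tau^2}(1+\tau(N+1)+\sqrt D);$$ $$\beta_1^*(\tau)=4(N+1)+8\tau,\quad \beta_2^*(\tau)=4+8\tau(N+1),\quad \beta_1^{**}(\tau)=8\tau(1+2\tau(N+1)),\quad \beta_2^{**}(\tau)=8\tau(N+1+2\tau).$$ *)

From HB Require Import structures.
From mathcomp Require Import all_boot all_order all_algebra.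
From mathcomp Require Import reals.
Set Implicit Arguments. Unset Strict Implicit. Unset Printing Implicit Defensive.
Import Order.TTheory GRing.Theory Num.Theory.
Local Open Scope ring_scope.

Section Betas.
Variables (R : realType) (N : nat).
Let n1 : R := (N.+1)%:R.

Definition Dd (t : R) : R := n1 ^+ 2 + 2 * t * n1 + 1.

Definition beta1_low (t : R) : R :=
  2 / (1 - t ^+ 2) * (n1 + t + t * Num.sqrt (Dd t)).
Definition beta1_up (t : R) : R :=
  2 / (1 - t ^+ 2) * (n1 + t + Num.sqrt (Dd t)).
Definition beta2_low (t : R) : R :=
  2 / (1 - t ^+ 2) * (1 + t * n1 + t * Num.sqrt (Dd t)).
Definition beta2_up (t : R) : R :=
  2 / (1 - t ^+ 2) * (1 + t * n1 + Num.sqrt (Dd t)).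

Definition beta1_s (t : R) : R := 4 * n1 + 8 * t.
Definition beta2_s (t : R) : R := 4 + 8 * t * n1.
Definition beta1_ss (t : R) : R := 8 * t * (1 + 2 * t * n1).
Definition beta2_ss (t : R) : R := 8 * t * (n1 + 2 * t).
End Betas.

From mathcomp Require Import all_boot all_order all_algebra.
From mathcomp Require Import reals ring lra.
Set Implicit Arguments. Unset Strict Implicit. Unset Printing Implicit Defensive.
Import Order.TTheory GRing.Theory Num.Theory.
Local Open Scope ring_scope.

(* Write a = N + 1.  Both differences are cubics in t:
   beta2* - t beta1** - 2 = 2 crit a t  and  beta1* - t beta2** - 2a = 2a crit (1/a) t,
   where crit a t = 1 + 4at - 4t^2 - 8at^3.  For any a > 0, crit a is positive on (0, 1/2],
   strictly decreasing on [1/2, oo) and negative at 1, so it has a single positive root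
   r_a in (1/2, 1/sqrt 2); since crit a t increases with a wherever 2t^2 < 1, r_a
   increases with a, whence r_(1/a) < r_a.  The beta-bounds enter through the identity
   disc a t - L^2 = (1 - t^2) (crit a t)^2, where L is the value of sqrt (disc a t) at
   which beta_up meets beta_ss; moreover beta_low = t beta_up + 2 identically.  Part (ii)
   is part (i) for the parameter 1/a, every quantity being scaled by a. *)

Section Threshold.
Variables (R : realType) (a : R).
Implicit Types r s t : R.

Definition crit t : R := 1 + 4 * a * t - 4 * t ^+ 2 - 8 * a * t ^+ 3.

Definition disc t : R := a ^+ 2 + 2 * t * a + 1.
Definition beta_up t : R := 2 / (1 - t ^+ 2) * (a + t + Num.sqrt (disc t)).
Definition beta_low t : R := 2 / (1 - t ^+ 2) * (1 + t * a + t * Num.sqrt (disc t)).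
Definition beta_s t : R := 4 + 8 * t * a.
Definition beta_ss t : R := 8 * t * (1 + 2 * t * a).

Definition threshold_spec (r t c bs bss blow bup : R) : Prop :=
  [/\ (bs - t * bss = c <-> t = r),
      (bs = blow /\ bss = bup <-> t = r),
      (bs - t * bss > c <-> t < r)
    & (t != r -> 0 < bss < bup)].

Lemma crit_gt0_small t : 0 < a -> 0 < t -> t <= 2^-1 -> 0 < crit t.
Proof.
move=> a_gt0 t_gt0 t_le; rewrite /crit.
have : 0 < 4 * a * t * (1 - 2 * t ^+ 2) by rewrite !mulr_gt0 //; nra.
have : 0 <= 1 - 4 * t ^+ 2 by nra.
nra.
Qed.

Lemma crit_decreasing s t : 0 < a -> 2^-1 <= s -> s < t -> crit t < crit s.
Proof.
move=> a_gt0 s_ge st.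
have -> : crit t = crit s - (t - s) * (4 * (s + t) - 4 * a + 8 * a * (s ^+ 2 + s * t + t ^+ 2)).
  by rewrite /crit; ring.
rewrite gtrDl oppr_lt0 mulr_gt0 ?subr_gt0 //.
have aQ_ge : 0 <= a * (s ^+ 2 + s * t + t ^+ 2 - 3 / 4).
  by apply: mulr_ge0; [exact: ltW | nra].
nra.
Qed.

Lemma crit_root_gt_half r : 0 < a -> 0 < r -> crit r = 0 -> 2^-1 < r.
Proof.
move=> a_gt0 r_gt0 root_r; rewrite ltNge; apply/negP => r_le.
by have := crit_gt0_small a_gt0 r_gt0 r_le; rewrite root_r ltxx.
Qed.

Lemma crit_root_sqr_lt r : 0 < a -> 0 < r -> crit r = 0 -> 2 * r ^+ 2 < 1.
Proof.
move=> a_gt0 r_gt0 root_r; have r_gt := crit_root_gt_half a_gt0 r_gt0 root_r.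
have : 4 * a * r * (1 - 2 * r ^+ 2) = 4 * r ^+ 2 - 1 by move: root_r; rewrite /crit; lra.
have : 0 < 4 * a * r by apply: mulr_gt0; lra.
nra.
Qed.

Section Root.
Variable r : R.
Hypotheses (a_gt0 : 0 < a) (r_gt0 : 0 < r) (root_r : crit r = 0).

Lemma crit_gt0_before t : 0 < t -> t < r -> 0 < crit t.
Proof.
move=> t_gt0 tr; have [t_le|t_gt] := lerP t 2^-1; first exact: crit_gt0_small.
by rewrite -root_r crit_decreasing // ltW.
Qed.

Lemma crit_lt0_after t : r < t -> crit t < 0.
Proof.
move=> rt; rewrite -root_r crit_decreasing //.
exact: ltW (crit_root_gt_half a_gt0 r_gt0 root_r).
Qed.

Lemma crit_gt0_iff t : 0 < t -> 0 < crit t <-> t < r.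
Proof.
move=> t_gt0; split; last exact: crit_gt0_before.
move=> crit_gt0; case: (ltgtP t r) => // [rt|tr].
- by have := crit_lt0_after rt; rewrite ltNge ltW.
- by move: crit_gt0; rewrite tr root_r ltxx.
Qed.

Lemma crit_eq0_iff t : 0 < t -> crit t = 0 <-> t = r.
Proof.
move=> t_gt0; split=> [crit0|->//].
case: (ltgtP t r) => // [tr|rt].
- by have := crit_gt0_before t_gt0 tr; rewrite crit0 ltxx.
- by have := crit_lt0_after rt; rewrite crit0 ltxx.
Qed.

End Root.

Lemma crit_root_exists : 0 < a -> exists2 r, 0 < r & crit r = 0.
Proof.
move=> a_gt0.
pose p : {poly R} := - (1 + (4 * a)%:P * 'X - 4%:P * 'X ^+ 2 - (8 * a)%:P * 'X ^+ 3).
have p_crit t : p.[t] = - crit t by rewrite /p /crit !hornerE.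
have p_sign : p.[2^-1] <= 0 <= p.[1].
  by rewrite !p_crit /crit; apply/andP; split; nra.
have half_le1 : (2^-1 : R) <= 1 by lra.
have [r /andP[r_ge _]] := poly_ivt half_le1 p_sign.
by rewrite /root p_crit oppr_eq0 => /eqP root_r; exists r => //; lra.
Qed.

Lemma beta_s_sub_ss t : beta_s t - t * beta_ss t = 2 + 2 * crit t.
Proof. by rewrite /beta_s /beta_ss /crit; ring. Qed.

Lemma beta_low_up t : t ^+ 2 != 1 -> beta_low t = t * beta_up t + 2.
Proof.
move=> t2_neq1; have : 1 - t ^+ 2 != 0 by rewrite subr_eq0 eq_sym.
by rewrite /beta_low /beta_up => ?; field.
Qed.

Lemma beta_ss_gt0 t : 0 < a -> 0 < t -> 0 < beta_ss t.
Proof. by move=> a_gt0 t_gt0; rewrite /beta_ss; apply: mulr_gt0; nra. Qed.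

Section Sqrt_gap.
Variable t : R.
Hypothesis t_01 : 0 < t < 1.

Let sqrt_meet : R := (1 - t ^+ 2) / 2 * beta_ss t - a - t.

Let one_sub_t2_gt0 : 0 < 1 - t ^+ 2. Proof. by case/andP: t_01; nra. Qed.

Lemma beta_up_sub_ss :
  beta_up t - beta_ss t = 2 / (1 - t ^+ 2) * (Num.sqrt (disc t) - sqrt_meet).
Proof. by rewrite /beta_up /sqrt_meet; field; rewrite gt_eqF. Qed.

Lemma disc_sub_sqrt_meet : disc t - sqrt_meet ^+ 2 = (1 - t ^+ 2) * crit t ^+ 2.
Proof. by rewrite /disc /sqrt_meet /beta_ss /crit; field. Qed.

Lemma beta_ss_lt_up : crit t != 0 -> beta_ss t < beta_up t.
Proof.
move=> crit_neq0; rewrite -subr_gt0 beta_up_sub_ss mulr_gt0 ?divr_gt0 // subr_gt0.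
have sqr_lt : sqrt_meet ^+ 2 < disc t.
  by rewrite -subr_gt0 disc_sub_sqrt_meet mulr_gt0 // exprn_even_gt0.
have disc_gt0 : 0 < disc t by exact: le_lt_trans (sqr_ge0 _) sqr_lt.
apply: le_lt_trans (ler_norm sqrt_meet) _.
by rewrite -sqrtr_sqr ltr_sqrt.
Qed.

Lemma beta_ss_eq_up : 0 < a -> crit t = 0 -> beta_ss t = beta_up t.
Proof.
move=> a_gt0 crit0; case/andP: t_01 => t_gt0 _.
have t_gt := crit_root_gt_half a_gt0 t_gt0 crit0.
have meet_gt0 : 0 < sqrt_meet.
  have -> : sqrt_meet = t * crit t + a * (4 * t ^+ 2 - 1) + 2 * t.
    by rewrite /sqrt_meet /beta_ss /crit; field.
  rewrite crit0 mulr0 add0r; apply: ltr_wpDl; last lra.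
  by apply: mulr_ge0; nra.
have disc_eq : disc t = sqrt_meet ^+ 2.
  by apply/eqP; rewrite -subr_eq0 disc_sub_sqrt_meet crit0 expr0n mulr0.
apply/eqP; rewrite eq_sym -subr_eq0 beta_up_sub_ss disc_eq sqrtr_sqr.
by rewrite ger0_norm ?subrr ?mulr0 // ltW.
Qed.

End Sqrt_gap.

Lemma beta_threshold r t : 0 < a -> 0 < r -> crit r = 0 -> 0 < t < 1 ->
  threshold_spec r t 2 (beta_s t) (beta_ss t) (beta_low t) (beta_up t).
Proof.
move=> a_gt0 r_gt0 root_r t_01; have /andP[t_gt0 t_lt1] := t_01.
have t2_neq1 : t ^+ 2 != 1 by apply/eqP; nra.
have crit0_iff := crit_eq0_iff a_gt0 r_gt0 root_r t_gt0.
split.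
- by rewrite beta_s_sub_ss -crit0_iff; split=> [?|->]; lra.
- split=> [[s_low ss_up]|/crit0_iff crit0].
  + apply/crit0_iff; have := beta_s_sub_ss t.
    by rewrite s_low ss_up beta_low_up //; lra.
  + have ss_up := beta_ss_eq_up t_01 a_gt0 crit0; split=> //.
    by have := beta_s_sub_ss t; rewrite crit0 ss_up beta_low_up //; lra.
- by rewrite beta_s_sub_ss -(crit_gt0_iff a_gt0 r_gt0 root_r t_gt0); split=> ?; lra.
- move=> t_neq_r; rewrite beta_ss_gt0 // beta_ss_lt_up //.
  by apply/eqP => /crit0_iff /eqP; rewrite (negbTE t_neq_r).
Qed.

End Threshold.

Lemma crit_root_lt (R : realType) (a b r s : R) : 0 < a -> a < b -> 0 < r -> 0 < s ->
  crit a r = 0 -> crit b s = 0 -> r < s.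
Proof.
move=> a_gt0 ab r_gt0 s_gt0 root_r root_s.
have b_gt0 : 0 < b by apply: lt_trans ab.
apply/(crit_gt0_iff b_gt0 s_gt0 root_s r_gt0).
have -> : crit b r = crit a r + 4 * (b - a) * r * (1 - 2 * r ^+ 2) by rewrite /crit; ring.
rewrite root_r add0r !mulr_gt0 ?subr_gt0 //.
exact: crit_root_sqr_lt root_r.
Qed.

Lemma lt_inv_sqrt2 (R : realType) (t : R) :
  0 <= t -> 2 * t ^+ 2 < 1 -> t < (Num.sqrt 2)^-1.
Proof.
move=> t_ge0 t2_lt; rewrite -sqrtrV; last lra.
have -> : t = Num.sqrt (t ^+ 2) by rewrite sqrtr_sqr ger0_norm.
by rewrite ltr_sqrt; lra.
Qed.

Lemma threshold_spec_scale (R : realType) (k r t c bs bss blow bup : R) : 0 < k ->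
  threshold_spec r t c bs bss blow bup ->
  threshold_spec r t (k * c) (k * bs) (k * bss) (k * blow) (k * bup).
Proof.
move=> k_gt0 [sub_eq low_up sub_gt ss_up]; rewrite /threshold_spec.
have k_neq0 := lt0r_neq0 k_gt0.
have -> : k * bs - t * (k * bss) = k * (bs - t * bss) by ring.
split.
- by split=> [/(mulfI k_neq0)/sub_eq|/sub_eq ->].
- by rewrite -low_up; split=> [[/(mulfI k_neq0) ? /(mulfI k_neq0)]|[-> ->]].
- by rewrite ltr_pM2l.
- by move=> /ss_up; rewrite pmulr_rgt0 // ltr_pM2l.
Qed.

Lemma sqrt_disc_inv (R : realType) (a t : R) : 0 < a ->
  Num.sqrt (disc a t) = a * Num.sqrt (disc a^-1 t).
Proof.
move=> a_gt0; have a_neq0 := lt0r_neq0 a_gt0.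
have -> : disc a t = a ^+ 2 * disc a^-1 t by rewrite /disc; field.
by rewrite sqrtrM ?sqr_ge0 // sqrtr_sqr ger0_norm // ltW.
Qed.

Section Parameter_inverse.
Variables (R : realType) (N : nat) (t : R).
Let a : R := (N.+1)%:R.
Let a_gt0 : 0 < a. Proof. by rewrite ltr0n. Qed.

Lemma beta1_s_inv : beta1_s N t = a * beta_s a^-1 t.
Proof. by rewrite /beta1_s /beta_s; field; rewrite nat1r pnatr_eq0. Qed.

Lemma beta2_ss_inv : beta2_ss N t = a * beta_ss a^-1 t.
Proof. by rewrite /beta2_ss /beta_ss; field; rewrite nat1r pnatr_eq0. Qed.

Lemma beta1_low_inv : beta1_low N t = a * beta_low a^-1 t.
Proof.
rewrite /beta1_low /beta_low (_ : Dd N t = disc a t) // sqrt_disc_inv //.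
by rewrite [RHS]mulrCA; congr (_ * _); field; rewrite nat1r pnatr_eq0.
Qed.

Lemma beta2_up_inv : beta2_up N t = a * beta_up a^-1 t.
Proof.
rewrite /beta2_up /beta_up (_ : Dd N t = disc a t) // sqrt_disc_inv //.
by rewrite [RHS]mulrCA; congr (_ * _); field; rewrite nat1r pnatr_eq0.
Qed.

End Parameter_inverse.

Theorem mainTheorem13 (R : realType) (N : nat) (hN : (0 < N)%N) :
  exists t1 t2 : R,
    [/\ 2^-1 < t2, t2 < t1 & t1 < (Num.sqrt 2)^-1] /\
    (* (i) *)
    (forall t : R, 0 < t < 1 ->
      [/\ (beta2_s N t - t * beta1_ss N t = 2 <-> t = t1),
          (beta2_s N t = beta2_low N t /\ beta1_ss N t = beta1_up N t <-> t = t1),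
          (beta2_s N t - t * beta1_ss N t > 2 <-> t < t1)
        & (t != t1 -> 0 < beta1_ss N t < beta1_up N t)]) /\
    (* (ii) *)
    (forall t : R, 0 < t < 1 ->
      [/\ (beta1_s N t - t * beta2_ss N t = 2 * (N.+1)%:R <-> t = t2),
          (beta1_s N t = beta1_low N t /\ beta2_ss N t = beta2_up N t <-> t = t2),
          (beta1_s N t - t * beta2_ss N t > 2 * (N.+1)%:R <-> t < t2)
        & (t != t2 -> 0 < beta2_ss N t < beta2_up N t)]).
Proof.
set a : R := (N.+1)%:R.
have a_gt1 : 1 < a by rewrite ltr1n ltnS.
have a_gt0 : 0 < a by lra.
have ainv_gt0 : 0 < a^-1 by rewrite invr_gt0.
have ainv_lt : a^-1 < a by rewrite (lt_trans _ a_gt1) // invf_lt1.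
have [t1 t1_gt0 root1] := crit_root_exists a_gt0.
have [t2 t2_gt0 root2] := crit_root_exists ainv_gt0.
exists t1, t2; split; [|split].
- split; first exact: crit_root_gt_half root2.
  + exact: crit_root_lt root2 root1.
  + by apply: lt_inv_sqrt2; [exact: ltW | exact: crit_root_sqr_lt root1].
- by move=> t t_01; apply: beta_threshold.
- move=> t t_01; rewrite beta1_s_inv beta2_ss_inv beta1_low_inv beta2_up_inv (mulrC 2).
  exact: threshold_spec_scale a_gt0 (beta_threshold ainv_gt0 t2_gt0 root2 t_01).
Qed.
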